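(* For integers $t,k\ge0$, the number $b(t,t+2k)$ of marked diagrams $t\to t+2k$ depends only on $t+k$; if $t+k=m$, this number is $\binom{2m}{m}$.
   Context: A Temperley–Lieb diagram $t\to s$ is a rectangle with $t$ points on its bottom edge and $s$ points on its top edge, joined in pairs by $(t+s)/2$ non-crossing arcs, up to isotopy. The arcs divide the rectangle into regions, among which there is a unique leftmost region (the one adjacent to the left edge). A marked diagram $t\to s$ is a Temperley–Lieb diagram $t\to s$ in which each arc lying on the boundary of the leftmost region carries either no mark or exactly one mark (dot), and other arcs carry no mark. *)

From mathcomp Require Import all_boot.
Set Implicit Arguments. Unset Strict Implicit. Unset Printing Implicit Defensive.

(* Boundary points of a diagram t -> s: inl i = i-th bottom point (from the
   left), inr j = j-th top point (from the left). *)
Definition pt (t s : nat) : finType := ('I_t + 'I_s)%type.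

(* Position of a boundary point when the boundary of the rectangle is read
   counterclockwise starting just after the left edge: bottom points left to
   right (positions 0..t-1), then top points right to left (t..t+s-1).
   The left edge lies between position t+s-1 and position 0. *)
Definition pos (t s : nat) (x : pt t s) : nat :=
  match x with inl i => nat_of_ord i | inr j => t + (s - j.+1) end.

(* A Temperley-Lieb diagram t -> s, up to isotopy, is a non-crossing perfect
   matching of the boundary points; f x is the point joined to x by an arc. *)
Definition TL_diagram (t s : nat) (f : {ffun pt t s -> pt t s}) : bool :=
  [forall x, (f (f x) == x) && (f x != x)] &&
  [forall x, forall y,
     ~~ [&& pos x < pos y, pos y < pos (f x) & pos (f x) < pos (f y)]].

(* The arc through x lies on the boundary of the leftmost region (the region
   adjacent to the left edge) iff it is not nested inside another arc in the
   linear order of positions (the cut being at the left edge). *)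
Definition on_leftmost (t s : nat) (f : {ffun pt t s -> pt t s}) (x : pt t s)
  : bool :=
  ~~ [exists y, (minn (pos y) (pos (f y)) < minn (pos x) (pos (f x))) &&
                (maxn (pos x) (pos (f x)) < maxn (pos y) (pos (f y)))].

(* A marked diagram: a TL diagram f together with the set M of endpoints of
   the marked (dotted) arcs; M is a union of arcs, all lying on the boundary
   of the leftmost region (each such arc carries no mark or exactly one). *)
Definition marked_diagram (t s : nat) (p : {ffun pt t s -> pt t s} * {set pt t s})
  : bool :=
  TL_diagram p.1 &&
  [forall x, (x \in p.2) ==> ((p.1 x \in p.2) && on_leftmost p.1 x)].

Definition b (t s : nat) : nat :=
  #|[pred p : {ffun pt t s -> pt t s} * {set pt t s} | marked_diagram p]|.

From mathcomp Require Import all_boot ssralg ssrnum ssrint zify ring.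
Import GRing.Theory.

(* Read the boundary points from left to right.  The number of arcs passing
   over each gap is a Dyck path whose matched up- and down-steps are exactly
   the arcs, so it determines the diagram.  The arcs on the boundary of the
   leftmost region are those of the excursions of this path from 0, and
   marking such an arc reflects its excursion below 0.  This identifies the
   marked diagrams t -> t + 2k with the +-1 paths of length 2m = 2(t + k) that
   end at 0, and such a path is determined by the set of its m up-steps. *)

Definition unit_steps (a : nat -> nat) (i j : nat) : Prop :=
  forall k, i <= k < j -> a k.+1 = a k + 1 \/ a k = a k.+1 + 1.

Lemma unit_steps_ivt a i j c : i <= j -> unit_steps a i j ->
  (a i <= c <= a j) || (a j <= c <= a i) -> exists2 k, i <= k <= j & a k = c.
Proof.
elim: j => [|j IH] le_ij steps hc.
  by exists 0; move: le_ij hc; rewrite leqn0 => /eqP ->; lia.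
have [e_ij|ne_ij] := eqVneq i j.+1.
  by exists j.+1; move: hc; rewrite e_ij; lia.
have steps' : unit_steps a i j by move=> k hk; apply: steps; lia.
have [hc'|/negP hc'] := boolP ((a i <= c <= a j) || (a j <= c <= a i)).
  have le_ij' : i <= j by lia.
  by have [k hk <-] := IH le_ij' steps' hc'; exists k => //; lia.
by exists j.+1 => //; have := steps j; lia.
Qed.

Lemma sub_unit_steps {a i j i' j'} : i <= i' -> j' <= j ->
  unit_steps a i j -> unit_steps a i' j'.
Proof. by move=> le_ii' le_j'j steps k hk; apply: steps; lia. Qed.

(* [matched a i j]: the step after position [i] rises from level [a i] and
   the step after position [j] is the first one to come back down to it. *)
Definition matched (a : nat -> nat) (i j : nat) : bool :=
  [&& i < j, a j.+1 == a i & all (fun k => a i < a k) (index_iota i.+1 j.+1)].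

Lemma matchedP a i j :
  reflect [/\ i < j, a j.+1 = a i & forall k, i < k <= j -> a i < a k]
          (matched a i j).
Proof.
apply: (iffP and3P) => [[lt_ij /eqP -> /allP above]|[lt_ij -> above]].
  by split=> // k hk; apply: above; rewrite mem_index_iota.
by split=> //; apply/allP => k; rewrite mem_index_iota; apply: above.
Qed.

Lemma eq_matched {a b : nat -> nat} : a =1 b -> matched a =2 matched b.
Proof.
by move=> ab i j; rewrite /matched !ab; congr [&& _, _ & _]; apply: eq_all => k; rewrite !ab.
Qed.

Section Matched.
Context {a : nat -> nat}.

Lemma matched_up {i j} : matched a i j -> a i < a i.+1.
Proof. by case/matchedP => lt_ij _ above; apply: above; lia. Qed.

Lemma matched_down {i j} : matched a i j -> a j.+1 < a j.
Proof. by case/matchedP => lt_ij -> above; apply: above; lia. Qed.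

Lemma matched_start_not_end {i j k} : matched a i j -> ~~ matched a k i.
Proof. by move=> /matched_up up; apply/negP => /matched_down; lia. Qed.

Lemma matched_inj_r {i j j'} : matched a i j -> matched a i j' -> j = j'.
Proof.
move=> /matchedP [lt_ij aj above] /matchedP [lt_ij' aj' above'].
case: (ltngtP j j') => // lt_jj'.
- by have := above' j.+1; rewrite aj; lia.
- by have := above j'.+1; rewrite aj'; lia.
Qed.

Lemma matched_inj_l {i i' j} : matched a i j -> matched a i' j -> i = i'.
Proof.
move=> /matchedP [lt_ij aj above] /matchedP [lt_i'j ai' above'].
case: (ltngtP i i') => // lt_ii'.
- by have := above i'; rewrite -aj ai'; lia.
- by have := above' i; rewrite -ai' aj; lia.
Qed.

Lemma matched_exists_r {i n} : unit_steps a i n -> i < n ->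
  a n <= a i < a i.+1 -> exists2 j, j < n & matched a i j.
Proof.
move=> steps lt_in /andP [le_ni rise].
have up : a i.+1 = (a i).+1 by have := steps i; lia.
pose back k := (i < k) && (a k == a i).
have [k hk ak] := @unit_steps_ivt a i.+1 n (a i) lt_in (sub_unit_steps (leqnSn i) (leqnn n) steps)
  ltac:(lia).
have back_k : back k by rewrite /back ak eqxx andbT; lia.
case: (ex_minnP (ex_intro back k back_k)) => j1 /andP [lt_ij1 /eqP aj1] min_j1.
have := min_j1 k back_k => le_j1k.
have lt_ij1' : i.+1 < j1 by case: (eqVneq j1 i.+1) => [e|]; [move: aj1; rewrite e up; lia | lia].
exists j1.-1; first by lia.
apply/matchedP; split; [lia | by rewrite prednK ?aj1 //; lia |].
move=> k1 hk1; case: (ltnP (a i) (a k1)) => // le_k1.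
have steps_k1 : unit_steps a i.+1 k1 by apply: (sub_unit_steps _ _ steps); lia.
have [k2 hk2 ak2] := @unit_steps_ivt a i.+1 k1 (a i) ltac:(lia) steps_k1 ltac:(lia).
by have := min_j1 k2; rewrite /back ak2 eqxx andbT; lia.
Qed.

Lemma matched_exists_l {j} : unit_steps a 0 j.+1 ->
  a 0 <= a j.+1 < a j -> exists i, matched a i j.
Proof.
move=> steps /andP [le_0j fall].
have down : a j = (a j.+1).+1 by have := steps j; lia.
pose back k := (k <= j) && (a k == a j.+1).
have [k hk ak] := @unit_steps_ivt a 0 j (a j.+1) (leq0n j)
  (sub_unit_steps (leqnn 0) (leqnSn j) steps) ltac:(lia).
have back_k : back k by rewrite /back ak eqxx andbT; lia.
have ub i : back i -> i <= j by case/andP.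
case: (ex_maxnP (ex_intro back k back_k) ub) => i1 /andP [le_i1j /eqP ai1] max_i1.
have lt_i1j : i1 < j by case: (eqVneq i1 j) => [e|]; [move: ai1; rewrite e down; lia | lia].
exists i1; apply/matchedP; split => // k1 hk1.
rewrite ai1; case: (ltnP (a j.+1) (a k1)) => // le_k1.
have [k2 hk2 ak2] := @unit_steps_ivt a k1 j (a j.+1) ltac:(lia)
  (sub_unit_steps (leq0n k1) (leqnSn j) steps) ltac:(lia).
by have := max_i1 k2; rewrite /back ak2 eqxx andbT; lia.
Qed.

End Matched.

Lemma sign_constant (h : nat -> int) i j : i <= j ->
  (forall k, i <= k < j -> (`|h k.+1 - h k| <= 1)%R) ->
  (forall k, i <= k <= j -> h k != 0%R) -> (h i < 0)%R = (h j < 0)%R.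
Proof.
elim: j => [|j IH] le_ij small nz.
  by move: le_ij; rewrite leqn0 => /eqP ->.
have [-> //|ne_ij] := eqVneq i j.+1.
rewrite IH; [|lia|by move=> k hk; apply: small; lia|by move=> k hk; apply: nz; lia].
have := small j ltac:(lia); have := nz j ltac:(lia); have := nz j.+1 ltac:(lia).
by move=> *; apply/idP/idP; lia.
Qed.

(* [lia] treats terms that agree only up to conversion as distinct atoms;
   naming every [pos] term first makes them shared. *)
Ltac pos_lia :=
  repeat match goal with H : context [@pos _ _ _] |- _ => revert H end;
  repeat match goal with |- context [@pos ?t ?s ?x] =>
    let p := fresh "p" in set p := @pos t s x end;
  lia.

Section Diagrams.
Variables t s : nat.
Local Notation T := (pt t s).
Local Notation N := (t + s).

Lemma pos_lt (x : T) : pos x < N.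
Proof. by case: x => [i|j] /=; [have := ltn_ord i | have := ltn_ord j]; lia. Qed.

Lemma pos_inj : injective (@pos t s).
Proof.
case=> [i|j] [i'|j'] /=; try have := ltn_ord i; try have := ltn_ord j;
  try have := ltn_ord i'; try have := ltn_ord j'; move=> *.
- by congr inl; apply: val_inj.
- lia.
- lia.
- by congr inr; apply: val_inj => /=; lia.
Qed.

Lemma eq_pos (x y : T) : (pos x == pos y) = (x == y).
Proof. exact: (inj_eq pos_inj). Qed.

Lemma pos_onto {k} : k < N -> exists x : T, pos x = k.
Proof.
move=> lt_kN; case: (ltnP k t) => lt_kt; first by exists (inl (Ordinal lt_kt)).
have lt_js : s - 1 - (k - t) < s by lia.
by exists (inr (Ordinal lt_js)) => /=; lia.
Qed.

Lemma card_pt : #|T| = N.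
Proof. by rewrite card_sum !card_ord. Qed.

Definition left_end (f : T -> T) (x : T) := pos x < pos (f x).

Definition in_span (f : T -> T) (r x : T) :=
  minn (pos r) (pos (f r)) <= pos x <= maxn (pos r) (pos (f r)).

Definition under_mark (f : T -> T) (M : {set T}) (x : T) :=
  [exists r in M, in_span f r x].

Definition mark_sign (f : T -> T) (M : {set T}) (x : T) : int :=
  if under_mark f M x then (-1)%R else 1%R.

(* The arcs passing over the gap just before position [k]. *)
Definition cut_arcs (f : T -> T) (k : nat) :=
  [set y | left_end f y && (pos y < k <= pos (f y))].

Definition depth (f : T -> T) (k : nat) := #|cut_arcs f k|.

Definition step (S : {set T}) (x : T) : int := if x \in S then 1%R else (-1)%R.

Definition height (S : {set T}) (k : nat) : int :=
  (\sum_(y : T | (pos y < k)%N) step S y)%R.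

(* A point is an up-step iff it is the left end of its arc, except under a
   marked arc, where the roles of the two ends are swapped. *)
Definition up_steps (p : {ffun T -> T} * {set T}) : {set T} :=
  [set x | left_end p.1 x != under_mark p.1 p.2 x].

Lemma depth0 f : depth f 0 = 0.
Proof. by apply/eqP; rewrite cards_eq0; apply/eqP/setP => y; rewrite !inE andbF. Qed.

Lemma depthN f k : N <= k -> depth f k = 0.
Proof.
move=> le_Nk; apply/eqP; rewrite cards_eq0; apply/eqP/setP => y; rewrite !inE.
by have := pos_lt (f y); case: (pos y < k) => //=; lia.
Qed.

Lemma height0 S : height S 0 = 0%R.
Proof. by rewrite /height big_pred0. Qed.

Lemma height_succ S x : height S (pos x).+1 = (height S (pos x) + step S x)%R.
Proof.
rewrite /height (bigD1 x) ?ltnSn //= addrC; congr (_ + _)%R.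
apply: eq_bigl => y; rewrite ltnS leq_eqVlt eq_pos.
by case: (eqVneq y x) => [->|]; rewrite ?ltnn ?andbF ?andbT.
Qed.

Lemma height_N_eq0 S : (height S N == 0%R) = (#|S| + #|S| == N).
Proof.
rewrite /height (eq_bigl predT) => [|y]; last by rewrite pos_lt.
rewrite (bigID (mem S)) /=.
rewrite (eq_bigr (fun=> 1%R)) => [|y]; last by rewrite /step => ->.
rewrite [X in (_ + X)%R](eq_bigr (fun=> (-1)%R)) => [|y /negbTE]; last by rewrite /step => ->.
rewrite !sumr_const mulNrn !natz.
have -> : #|[pred y | ~~ mem S y]| = #|~: S| by apply: eq_card => y; rewrite !inE.
have := cardsC S; rewrite card_pt; set c := #|S|; set c' := #|~: S|; lia.
Qed.

Section TL.
Context {f : {ffun T -> T}}.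
Hypothesis f_TL : TL_diagram f.

Lemma TL_involutive x : f (f x) = x.
Proof. by case/andP: f_TL => /forallP /(_ x) /andP [/eqP]. Qed.

Lemma TL_noncrossing x y :
  ~~ [&& pos x < pos y, pos y < pos (f x) & pos (f x) < pos (f y)].
Proof. by case/andP: f_TL => _ /forallP /(_ x) /forallP /(_ y). Qed.

Lemma pos_f_neq x : pos (f x) != pos x.
Proof. by rewrite eq_pos; case/andP: f_TL => /forallP /(_ x) /andP []. Qed.

Lemma pos_f_eq x y : (pos (f y) == pos x) = (y == f x).
Proof. by rewrite eq_pos; apply/eqP/eqP => [<-|->]; rewrite TL_involutive. Qed.

Lemma left_end_f x : left_end f (f x) = ~~ left_end f x.
Proof. by rewrite /left_end TL_involutive; have := pos_f_neq x; lia. Qed.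

Lemma in_span_f r : in_span f (f r) =1 in_span f r.
Proof. by move=> x; rewrite /in_span TL_involutive minnC maxnC. Qed.

Lemma on_leftmost_f r : on_leftmost f (f r) = on_leftmost f r.
Proof. by rewrite /on_leftmost TL_involutive minnC maxnC. Qed.

Lemma min_max_pos x :
  minn (pos x) (pos (f x)) = (if left_end f x then pos x else pos (f x)) /\
  maxn (pos x) (pos (f x)) = (if left_end f x then pos (f x) else pos x).
Proof. by rewrite /left_end; have := pos_f_neq x; case: ifP; lia. Qed.

Lemma in_span_left_end u x :
  left_end f u -> in_span f u x = (pos u <= pos x <= pos (f u)).
Proof. by move=> lu; rewrite /in_span; case: (min_max_pos u) => -> ->; rewrite lu. Qed.

Lemma left_end_of_arc r : exists2 u, left_end f u & u = r \/ u = f r.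
Proof.
case lr: (left_end f r); first by exists r => //; left.
by exists (f r); [rewrite left_end_f lr | right].
Qed.

Lemma arc_span y : exists2 v, left_end f v &
  minn (pos y) (pos (f y)) = pos v /\ maxn (pos y) (pos (f y)) = pos (f v).
Proof.
have [v lv ev] := left_end_of_arc y; exists v => //.
have [mn mx] := min_max_pos v; rewrite lv in mn mx.
case: ev => ev; subst v; first by [].
by rewrite TL_involutive minnC maxnC in mn mx; rewrite TL_involutive.
Qed.

Lemma nested_inside {x z : T} : left_end f x -> pos x < pos z < pos (f x) ->
  pos x < pos (f z) < pos (f x).
Proof.
rewrite /left_end => lx hz.
have n1 : pos (f z) != pos x.
  by rewrite pos_f_eq; apply/eqP => e; move: hz; rewrite e; lia.
have n2 : pos (f z) != pos (f x).
  by rewrite eq_pos; apply/eqP => e; move: hz; rewrite -(TL_involutive z) e TL_involutive; lia.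
have n3 := pos_f_neq z.
have c1 := TL_noncrossing x z.
have c2 := TL_noncrossing (f z) x; rewrite TL_involutive in c2.
lia.
Qed.

(* An arc on the boundary of the leftmost region is nested in no other arc,
   so it contains every arc with which it shares a point. *)
Lemma leftmost_contains {u v z : T} : left_end f u -> left_end f v -> on_leftmost f u ->
  pos u <= pos z <= pos (f u) -> pos v <= pos z <= pos (f v) ->
  pos u <= pos v /\ pos (f v) <= pos (f u).
Proof.
move=> lu lv outer_u hu hv.
have [->|ne_vu] := eqVneq v u; first by [].
move: outer_u; rewrite /on_leftmost => /existsPn /(_ v).
have [-> ->] := min_max_pos u; have [-> ->] := min_max_pos v; rewrite lu lv => outer_u.
have e1 : pos v != pos u by rewrite eq_pos.
have e2 : pos (f v) != pos (f u) by rewrite eq_pos (can_eq TL_involutive).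
have e3 : pos v != pos (f u) by rewrite eq_pos; apply/eqP => e; move: lv; rewrite e left_end_f lu.
have e4 : pos (f v) != pos u.
  by rewrite pos_f_eq; apply/eqP => e; move: lv; rewrite e left_end_f lu.
have c1 := TL_noncrossing u v; have c2 := TL_noncrossing v u.
move: lu lv; rewrite /left_end; lia.
Qed.

Lemma cut_arcs_succ x : cut_arcs f (pos x).+1 =
  if left_end f x then x |: cut_arcs f (pos x) else cut_arcs f (pos x) :\ f x.
Proof.
apply/setP => y; have := left_end_f x; rewrite /left_end => lfx.
case lx: (pos x < pos (f x)) lfx => lfx; rewrite !inE /left_end.
all: have [->|ne_yx] := eqVneq y x; first by rewrite ?eqxx lx /=; lia.
all: have [->|ne_yfx] := eqVneq y (f x); first by rewrite TL_involutive; lia.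
all: have e1 : pos y != pos x by rewrite eq_pos.
all: have e2 : pos (f y) != pos x by rewrite pos_f_eq.
all: by apply/idP/idP; lia.
Qed.

Lemma depth_succ x : ((depth f (pos x).+1)%:Z =
  (depth f (pos x))%:Z + if left_end f x then 1 else -1)%R.
Proof.
rewrite /depth cut_arcs_succ; case lx: (left_end f x).
  have nx : x \notin cut_arcs f (pos x) by rewrite inE ltnn andbF.
  by rewrite cardsU1 nx; lia.
have fx_in : f x \in cut_arcs f (pos x).
  rewrite inE left_end_f lx TL_involutive leqnn andbT /=.
  by move/negbT: lx; rewrite /left_end; have := pos_f_neq x; pos_lia.
by rewrite [#|cut_arcs f (pos x)|](cardsD1 (f x)) fx_in; lia.
Qed.

Lemma depth_inside x k : left_end f x -> pos x < k <= pos (f x) ->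
  depth f (pos x) < depth f k.
Proof.
move=> lx hk.
have nx : x \notin cut_arcs f (pos x) by rewrite inE ltnn andbF.
apply: (@leq_trans #|x |: cut_arcs f (pos x)|); first by rewrite cardsU1 nx.
apply: subset_leq_card; apply/subsetP => y; rewrite !inE.
case: (eqVneq y x) => [->|ne_yx] /=; first by rewrite lx.
case/andP => ly hy; rewrite ly /=.
have e1 : pos (f y) != pos x.
  by rewrite pos_f_eq; apply/eqP => e; move: ly; rewrite e left_end_f lx.
have e2 : pos (f y) != pos (f x) by rewrite eq_pos (can_eq TL_involutive).
have c := TL_noncrossing y x.
move: lx ly hk hy; rewrite /left_end; pos_lia.
Qed.

Lemma cut_arcs_f x : left_end f x -> cut_arcs f (pos (f x)).+1 = cut_arcs f (pos x).
Proof.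
move=> lx; apply/setP => y; rewrite !inE.
have [->|ne_yx] := eqVneq y x; first by move: lx; rewrite /left_end; pos_lia.
have [->|ne_yfx] := eqVneq y (f x); first by rewrite left_end_f lx.
case ly: (left_end f y) => //=.
have e1 : pos (f y) != pos x by rewrite pos_f_eq.
have e2 : pos (f y) != pos (f x) by rewrite eq_pos (can_eq TL_involutive).
have e3 : pos y != pos x by rewrite eq_pos.
have e4 : pos y != pos (f x) by rewrite eq_pos.
have c := TL_noncrossing y x.
have [inside|] := boolP (pos x < pos y < pos (f x)).
  by have := nested_inside lx inside; move: lx ly; rewrite /left_end; pos_lia.
by move: lx ly; rewrite /left_end; pos_lia.
Qed.

Lemma matched_depth x : left_end f x -> matched (depth f) (pos x) (pos (f x)).
Proof.
move=> lx; apply/matchedP; split => //; first by rewrite /depth cut_arcs_f.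
by move=> k hk; apply: depth_inside.
Qed.

(* Each marked arc is outermost, so an arc passing over the gap after [x]
   lies inside every marked arc that contains [x]. *)
Lemma under_mark_succ {M : {set T}} {x x' : T} : {in M, forall r, on_leftmost f r} ->
  pos x' = (pos x).+1 -> 0 < depth f (pos x).+1 -> under_mark f M x = under_mark f M x'.
Proof.
move=> outer ex' /card_gt0P [y]; rewrite inE => /andP [ly hy].
apply: eq_existsb => r; case rM: (r \in M) => //=.
have [u lu eu] := left_end_of_arc r.
have [span_u outer_u] : in_span f r =1 in_span f u /\ on_leftmost f u.
  have outer_r := outer r rM.
  by case: eu => ->; split; rewrite ?on_leftmost_f // => z; rewrite ?in_span_f.
rewrite !span_u !in_span_left_end //.
move: (ly) (lu); rewrite /left_end => ly' lu'.
apply/idP/idP => hz.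
- have hv : pos y <= pos x <= pos (f y) by move: hy; pos_lia.
  by have := leftmost_contains lu ly outer_u hz hv; move: hy hz; rewrite ex'; pos_lia.
- have hv : pos y <= pos x' <= pos (f y) by move: hy; rewrite ex'; pos_lia.
  by have := leftmost_contains lu ly outer_u hz hv; move: hy hz; rewrite ex'; pos_lia.
Qed.

Lemma step_up_steps (M : {set T}) x :
  step (up_steps (f, M)) x = (mark_sign f M x * if left_end f x then 1 else -1)%R.
Proof.
by rewrite /step /up_steps inE /mark_sign /=; case: (left_end f x); case: (under_mark f M x).
Qed.

Lemma height_up_steps {M : {set T}} : {in M, forall r, on_leftmost f r} ->
  forall x, height (up_steps (f, M)) (pos x).+1 = (mark_sign f M x * (depth f (pos x).+1)%:Z)%R.
Proof.
move=> outer; suff H k x : pos x = k ->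
    height (up_steps (f, M)) (pos x).+1 = (mark_sign f M x * (depth f (pos x).+1)%:Z)%R.
  by move=> x; apply: (H _ x).
elim: k x => [|k IH] x ex.
  by rewrite height_succ depth_succ ex height0 depth0 step_up_steps; ring.
have [x' ex'] : exists x' : T, pos x' = k by apply: pos_onto; have := pos_lt x; lia.
rewrite height_succ depth_succ step_up_steps ex -ex' IH //.
have [->|depth_pos] := posnP (depth f (pos x').+1); first by ring.
have ex'x : pos x = (pos x').+1 by rewrite ex ex'.
by rewrite /mark_sign (under_mark_succ outer ex'x depth_pos); ring.
Qed.

End TL.

Lemma TL_depth_inj (f g : {ffun T -> T}) : TL_diagram f -> TL_diagram g ->
  depth f =1 depth g -> f = g.
Proof.
move=> f_TL g_TL dfg.
have mf x : left_end f x -> matched (depth f) (pos x) (pos (f x)) by apply: matched_depth.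
have mg x : left_end g x -> matched (depth f) (pos x) (pos (g x)).
  by move=> lx; rewrite (eq_matched dfg); apply: matched_depth.
apply/ffunP => x.
case lfx: (left_end f x); case lgx: (left_end g x).
- exact/pos_inj/(matched_inj_r (mf _ lfx) (mg _ lgx)).
- have := mg (g x); rewrite left_end_f // lgx TL_involutive // => /(_ isT) m.
  by rewrite (negbTE (matched_start_not_end (mf _ lfx))) in m.
- have := mf (f x); rewrite left_end_f // lfx TL_involutive // => /(_ isT) m.
  by rewrite (negbTE (matched_start_not_end (mg _ lgx))) in m.
- have := mf (f x); rewrite left_end_f // lfx TL_involutive // => /(_ isT) m.
  have := mg (g x); rewrite left_end_f // lgx TL_involutive // => /(_ isT) m'.
  exact/pos_inj/(matched_inj_l m m').
Qed.

Lemma marked_diagram_TL {f : {ffun T -> T}} {M} : marked_diagram (f, M) -> TL_diagram f.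
Proof. by case/andP. Qed.

Lemma marked_diagram_closed {f : {ffun T -> T}} {M r} :
  marked_diagram (f, M) -> r \in M -> f r \in M.
Proof. by case/andP => _ /forallP /(_ r) /implyP H /H /andP []. Qed.

Lemma marked_diagram_leftmost {f : {ffun T -> T}} {M} :
  marked_diagram (f, M) -> {in M, forall r, on_leftmost f r}.
Proof. by case/andP => _ /forallP H r /(implyP (H r)) /andP []. Qed.

Lemma depth_abs_height {f : {ffun T -> T}} {M} : marked_diagram (f, M) ->
  forall k, k <= N -> depth f k = `|height (up_steps (f, M)) k|%N.
Proof.
move=> fM [|k] lt_kN; first by rewrite depth0 height0.
have [x <-] := pos_onto lt_kN.
rewrite (height_up_steps (marked_diagram_TL fM) (marked_diagram_leftmost fM)).
by rewrite /mark_sign; case: under_mark; rewrite ?mulN1r ?mul1r ?abszN.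
Qed.

Lemma marks_sub {f : {ffun T -> T}} {M M'} :
  marked_diagram (f, M) -> marked_diagram (f, M') ->
  under_mark f M =1 under_mark f M' -> M \subset M'.
Proof.
move=> fM fM' eq_um; have f_TL := marked_diagram_TL fM.
apply/subsetP => p pM.
have [u lu eu] := left_end_of_arc f_TL p.
have outer_u : on_leftmost f u.
  by case: eu => ->; rewrite ?(on_leftmost_f f_TL); apply: marked_diagram_leftmost fM p pM.
have : under_mark f M' u.
  by rewrite -eq_um; apply/existsP; exists p; rewrite pM /in_span; case: eu => ->; lia.
case/existsP => r /andP [rM' span_r].
have [u' lu' eu'] := left_end_of_arc f_TL r.
have outer_u' : on_leftmost f u'.
  by case: eu' => ->; rewrite ?(on_leftmost_f f_TL); apply: marked_diagram_leftmost fM' r rM'.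
have span_u' : pos u' <= pos u <= pos (f u').
  by rewrite -in_span_left_end //; case: eu' => ->; rewrite ?(in_span_f f_TL).
have span_u : pos u <= pos u <= pos (f u) by move: lu; rewrite /left_end; lia.
have [le_u'u _] := leftmost_contains f_TL lu' lu outer_u' span_u' span_u.
have [le_uu' _] := leftmost_contains f_TL lu lu' outer_u span_u span_u'.
have uM' : u \in M'.
  have -> : u = u' by apply: pos_inj; lia.
  by case: eu' => ->; last exact: marked_diagram_closed fM' rM'.
case: eu => [<- //|eu].
by rewrite -(TL_involutive f_TL p) -eu; apply: marked_diagram_closed fM' uM'.
Qed.

Lemma up_steps_inj p q : marked_diagram p -> marked_diagram q ->
  up_steps p = up_steps q -> p = q.
Proof.
case: p q => [f M] [g M'] fM gM' e.
have eq_fg : f = g.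
  apply: TL_depth_inj (marked_diagram_TL fM) (marked_diagram_TL gM') _ => k.
  case: (leqP k N) => [le_kN|lt_Nk]; last by rewrite !depthN // ltnW.
  by rewrite (depth_abs_height fM) // (depth_abs_height gM') // e.
subst g; have eq_um : under_mark f M =1 under_mark f M'.
  move=> x; move/setP/(_ x): e; rewrite !inE /=.
  by case: left_end; case: under_mark; case: under_mark.
by congr pair; apply/eqP; rewrite eqEsubset !(marks_sub fM gM', marks_sub gM' fM).
Qed.

Lemma height_inj S S' :
  (forall x : T, height S (pos x).+1 = height S' (pos x).+1) -> S = S'.
Proof.
move=> eqSS'; apply/setP => x.
have eq_x : height S (pos x) = height S' (pos x).
  case ex: (pos x) => [|k]; first by rewrite !height0.
  have [y <-] : exists y : T, pos y = k by apply: pos_onto; have := pos_lt x; lia.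
  exact: eqSS'.
have := eqSS' x; rewrite !height_succ eq_x => /addrI.
by rewrite /step; case: (x \in S); case: (x \in S').
Qed.

Section PathDiagram.
Variable S : {set T}.
Hypothesis height_N : height S N = 0%R.

Local Notation a := (fun k => `|height S k|%N).

Lemma height_succ_pm1 k : k < N ->
  height S k.+1 = (height S k + 1)%R \/ height S k.+1 = (height S k - 1)%R.
Proof.
move=> lt_kN; have [x <-] := pos_onto lt_kN.
by rewrite height_succ /step; case: (x \in S); [left | right].
Qed.

Lemma abs_height_steps : unit_steps a 0 N.
Proof. by move=> k hk; have := height_succ_pm1 k; lia. Qed.

Lemma height_sign_constant i j : i <= j <= N -> (forall k, i <= k <= j -> 0 < a k) ->
  (height S i < 0)%R = (height S j < 0)%R.
Proof.
move=> hij above; apply: sign_constant; first by lia.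
  by move=> k hk; have := height_succ_pm1 k; lia.
by move=> k hk; have := above k hk; lia.
Qed.

Definition path_diagram : {ffun T -> T} :=
  [ffun x => odflt x [pick y | matched a (pos x) (pos y) || matched a (pos y) (pos x)]].

Local Notation g := path_diagram.

Lemma path_diagram_matched x :
  matched a (pos x) (pos (g x)) || matched a (pos (g x)) (pos x).
Proof.
rewrite ffunE; case: pickP => [y //|none] /=; exfalso.
have lt_xN := pos_lt x; have steps := abs_height_steps.
have := steps (pos x) ltac:(lia); case: (ltngtP (a (pos x)) (a (pos x).+1)); try lia.
- move=> rise _; have [j lt_jN m] := matched_exists_r (sub_unit_steps (leq0n _) (leqnn N) steps)
    lt_xN ltac:(rewrite /= height_N; lia).
  by have [y ey] := pos_onto lt_jN; have := none y; rewrite ey m.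
- move=> fall _; have [i m] := matched_exists_l (sub_unit_steps (leqnn 0) lt_xN steps)
    ltac:(rewrite /= height0; lia).
  have [y ey] : exists y : T, pos y = i by apply: pos_onto; case/matchedP: m; lia.
  by have := none y; rewrite ey m orbT.
Qed.

Lemma left_end_path x : left_end g x = (a (pos x) < a (pos x).+1).
Proof.
case/orP: (path_diagram_matched x) => m.
  by rewrite /left_end (matched_up m); case/matchedP: m.
by have := matched_down m; case/matchedP: m => lt _ _; rewrite /left_end; lia.
Qed.

Lemma path_matched_left {x} : left_end g x -> matched a (pos x) (pos (g x)).
Proof. by case/orP: (path_diagram_matched x) => // /matchedP [lt _ _]; rewrite /left_end; lia. Qed.

Lemma path_diagram_TL : TL_diagram g.
Proof.
apply/andP; split.
  apply/forallP => x; apply/andP; split; last first.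
    by case/orP: (path_diagram_matched x) => /matchedP [lt _ _];
      apply/eqP => e; move: lt; rewrite e ltnn.
  apply/eqP/pos_inj.
  have := path_diagram_matched x; have := path_diagram_matched (g x).
  case/orP => m1; case/orP => m2.
  - by rewrite (negbTE (matched_start_not_end m1)) in m2.
  - exact: matched_inj_r m1 m2.
  - exact: matched_inj_l m1 m2.
  - by rewrite (negbTE (matched_start_not_end m2)) in m1.
apply/forallP => x; apply/forallP => y; apply/negP => /and3P [h1 h2 h3].
have /matchedP [_ ret_x above_x] := @path_matched_left x ltac:(rewrite /left_end; lia).
have /matchedP [_ ret_y above_y] := @path_matched_left y ltac:(rewrite /left_end; lia).
have := above_x (pos y) ltac:(lia); have := above_y (pos (g x)).+1 ltac:(lia).
by rewrite ret_x; lia.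
Qed.

(* The arcs of the excursions of the path below level 0: each one starts or
   ends at level 0. *)
Definition path_marks : {set T} :=
  [set x | ((a (pos x) == 0) && (height S (pos x).+1 < 0)%R) ||
           ((a (pos x).+1 == 0) && (height S (pos x) < 0)%R)].

Lemma mem_path_marks_left x : left_end g x ->
  (x \in path_marks) = (a (pos x) == 0) && (height S (pos x).+1 < 0)%R.
Proof.
rewrite left_end_path inE => rise.
by rewrite (_ : (a (pos x).+1 == 0) = false) ?orbF //; lia.
Qed.

Lemma mem_path_marks_right x : left_end g x ->
  (g x \in path_marks) = (a (pos x) == 0) && (height S (pos x).+1 < 0)%R.
Proof.
move=> lx; have /matchedP [lt ret above] := path_matched_left lx.
rewrite inE ret (_ : (a (pos (g x)) == 0) = false) /=; last by have := above (pos (g x)); pos_lia.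
case: eqP => //= a0; symmetry; apply: height_sign_constant => [|k hk].
  by have := pos_lt (g x); pos_lia.
by have := above k; pos_lia.
Qed.

Lemma path_marks_closed x : x \in path_marks -> g x \in path_marks.
Proof.
case lx: (left_end g x); first by rewrite mem_path_marks_left // mem_path_marks_right.
have lgx : left_end g (g x) by rewrite (left_end_f path_diagram_TL) lx.
by rewrite -{1}(TL_involutive path_diagram_TL x) mem_path_marks_right // mem_path_marks_left.
Qed.

Lemma path_marks_leftmost : {in path_marks, forall x, on_leftmost g x}.
Proof.
have g_TL := path_diagram_TL.
move=> x xM; have [u lu eu] := left_end_of_arc g_TL x.
have uM : u \in path_marks by case: eu => ->; last exact: path_marks_closed.
rewrite -(_ : on_leftmost g u = on_leftmost g x); last by case: eu => ->; rewrite ?on_leftmost_f.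
move: uM; rewrite mem_path_marks_left // => /andP [/eqP a0 _].
apply/existsPn => y; apply/negP => /andP [].
have [v lv [-> ->]] := arc_span g_TL y.
have [-> ->] := min_max_pos g_TL u; rewrite lu => lt_vu lt_gu.
have /matchedP [_ _ above] := path_matched_left lv.
by have := above (pos u); move: lu; rewrite /left_end; pos_lia.
Qed.

Lemma path_marked_diagram : marked_diagram (g, path_marks).
Proof.
apply/andP; split; first exact: path_diagram_TL.
apply/forallP => x; apply/implyP => xM /=.
by rewrite path_marks_closed // path_marks_leftmost.
Qed.

Lemma depth_path k : k <= N -> depth g k = a k.
Proof.
elim: k => [|k IH] le_kN; first by rewrite depth0 height0.
have [x ex] := pos_onto le_kN.
have := depth_succ path_diagram_TL x; rewrite left_end_path ex IH; last by lia.
by have := abs_height_steps k ltac:(lia); case: ltnP; lia.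
Qed.

Lemma under_mark_path_neg {x} : under_mark g path_marks x ->
  a (pos x).+1 != 0 -> (height S (pos x).+1 < 0)%R.
Proof.
have g_TL := path_diagram_TL.
case/existsP => r /andP [rM span_r] nz.
have [u lu eu] := left_end_of_arc g_TL r.
have uM : u \in path_marks by case: eu => ->; last exact: path_marks_closed.
have span_u : pos u <= pos x <= pos (g u).
  by rewrite -in_span_left_end //; case: eu span_r => -> //; rewrite in_span_f.
move: uM; rewrite mem_path_marks_left // => /andP [/eqP a0 neg].
have /matchedP [_ ret above] := path_matched_left lu.
have ne_xgu : pos x != pos (g u) by apply: contra nz => /eqP ->; rewrite ret a0.
rewrite -(@height_sign_constant (pos u).+1 (pos x).+1) //.
  by have := pos_lt (g u); move: span_u ne_xgu; pos_lia.
by move=> k hk; have := above k; move: span_u ne_xgu hk; pos_lia.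
Qed.

(* The excursion below 0 through [x] starts at the last zero of the path
   before [x]; its arc is marked and spans [x]. *)
Lemma neg_under_mark_path {x} : (height S (pos x).+1 < 0)%R -> under_mark g path_marks x.
Proof.
move=> neg.
pose zero k := (k <= pos x) && (height S k == 0%R).
have zero0 : zero 0 by rewrite /zero height0 eqxx.
have ub i : zero i -> i <= pos x by case/andP.
case: (ex_maxnP (ex_intro zero 0 zero0) ub) => k0 /andP [le_k0x /eqP h0] max_k0.
have [u eu] : exists u : T, pos u = k0 by apply: pos_onto; have := pos_lt x; lia.
subst k0; have neg_u : (height S (pos u).+1 < 0)%R.
  rewrite (@height_sign_constant (pos u).+1 (pos x).+1) //; first by have := pos_lt x; lia.
  move=> k hk; have [->|ne_k] := eqVneq k (pos x).+1; first by lia.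
  by have := max_k0 k; rewrite /zero; case: eqP; lia.
have lu : left_end g u.
  by rewrite left_end_path h0; have := height_succ_pm1 _ (pos_lt u); lia.
apply/existsP; exists u; rewrite mem_path_marks_left // h0 neg_u /=.
rewrite (in_span_left_end path_diagram_TL) // le_k0x /=.
case: (leqP (pos x) (pos (g u))) => // lt_gux.
have /matchedP [_ ret _] := path_matched_left lu.
have zero_gu : zero (pos (g u)).+1 by rewrite /zero lt_gux -absz_eq0 ret h0.
by have := max_k0 _ zero_gu; move: lu; rewrite /left_end; pos_lia.
Qed.

Lemma mark_sign_path x : (mark_sign g path_marks x * (a (pos x).+1)%:Z)%R = height S (pos x).+1.
Proof.
have [a0|nz] := eqVneq (a (pos x).+1) 0.
  by rewrite a0 mulr0; apply/esym/eqP; rewrite -absz_eq0 a0.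
rewrite /mark_sign; have [um|not_um] := boolP (under_mark g path_marks x).
  by have := under_mark_path_neg um nz; lia.
have : ~~ (height S (pos x).+1 < 0)%R by apply: contra not_um => /neg_under_mark_path.
by lia.
Qed.

Lemma up_steps_path : up_steps (g, path_marks) = S.
Proof.
apply: height_inj => x.
rewrite (height_up_steps path_diagram_TL path_marks_leftmost) depth_path ?mark_sign_path //.
exact: pos_lt.
Qed.

End PathDiagram.

Lemma card_marked_diagrams m : N = m + m ->
  #|[set p : {ffun T -> T} * {set T} | marked_diagram p]| = 'C(N, m).
Proof.
move=> N2m; set D := [set p | marked_diagram p].
have up_steps_inj_D : {in D &, injective up_steps}.
  by move=> p q; rewrite !inE; apply: up_steps_inj.
rewrite -(card_in_imset up_steps_inj_D) -card_pt -card_draws.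
apply: eq_card => S; rewrite [RHS]inE; apply/imsetP/eqP.
  case=> [[f M]]; rewrite inE => fM ->.
  have := depth_abs_height fM _ (leqnn N); rewrite depthN // => /esym/eqP.
  by rewrite absz_eq0 height_N_eq0 N2m; set c := #|up_steps (f, M)|; lia.
move=> card_S; have height_N : height S N = 0%R by apply/eqP; rewrite height_N_eq0 card_S N2m.
by exists (path_diagram S, path_marks S); rewrite ?inE ?path_marked_diagram ?up_steps_path.
Qed.

End Diagrams.

Theorem proposition5p2 :
  (forall t k t' k' : nat, t + k = t' + k' -> b t (t + 2 * k) = b t' (t' + 2 * k'))
  /\ (forall t k m : nat, t + k = m -> b t (t + 2 * k) = 'C(2 * m, m)).
Proof.
have b_binomial t k m : t + k = m -> b t (t + 2 * k) = 'C(2 * m, m).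
  move=> tkm; rewrite /b -(_ : t + (t + 2 * k) = 2 * m); last by lia.
  by rewrite -(@card_marked_diagrams t (t + 2 * k) m); [apply: eq_card => p; rewrite inE | lia].
split=> // t k t' k' e.
by rewrite (b_binomial t k (t + k)) // (b_binomial t' k' (t + k)).
Qed.
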